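(* Let $G=(V,E)$ be a unit-weight graph, let $\mathrm{DS}$ be a dominating set of $G$, and let $\mathrm{IS}$ be an arbitrary maximal independent set of the subgraph of $G$ induced by $V\setminus\mathrm{DS}$. Then $\mathrm{Cut}(\mathrm{IS},V\setminus\mathrm{IS})\ge|V|-|\mathrm{DS}|$.
   Context: For a unit-weight graph, $W$ is the symmetric $\{0,1\}$ matrix with $W_{v,v}=1$ and $W_{u,v}=1$ iff $\{u,v\}\in E$. For $S\subseteq V$, $\mathrm{Cut}(S,V\setminus S)=\sum_{u\in S}\sum_{v\in V\setminus S}W_{u,v}$, i.e., the number of edges between $S$ and $V\setminus S$. A dominating set is a set $D$ such that every vertex not in $D$ has a neighbor in $D$. *)

From mathcomp Require Import all_boot.
Set Implicit Arguments. Unset Strict Implicit. Unset Printing Implicit Defensive.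

Definition simple_graph (T : finType) (e : rel T) : Prop :=
  symmetric e /\ irreflexive e.

Definition W (T : finType) (e : rel T) (u v : T) : nat :=
  ((u == v) || e u v : nat).

Definition cut (T : finType) (e : rel T) (S : {set T}) : nat :=
  \sum_(u in S) \sum_(v in ~: S) W e u v.

Definition dominating (T : finType) (e : rel T) (D : {set T}) : Prop :=
  forall v, v \notin D -> exists2 u, u \in D & e v u.

Definition independent (T : finType) (e : rel T) (S : {set T}) : Prop :=
  forall u v, u \in S -> v \in S -> ~~ e u v.

Definition maximal_independent_in (T : finType) (e : rel T) (U S : {set T}) : Prop :=
  [/\ S \subset U, independent e S &
      forall S' : {set T}, S \proper S' -> S' \subset U -> ~ independent e S'].

From mathcomp Require Import all_boot.

Set Implicit Arguments.
Unset Strict Implicit.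
Unset Printing Implicit Defensive.

(* Split V \ DS into IS and the rest.  Each vertex of IS lies outside DS, so it
   has a neighbour in DS, which is outside IS: these edges give at least |IS|.
   Each other vertex of V \ DS has a neighbour in IS, by maximality: these
   edges give at least |(V \ DS) \ IS|.  The two families of cut edges are
   disjoint, as their endpoints outside IS lie in DS and in V \ DS. *)

Section BipartiteEdgeCount.

Variables (T : finType) (e : rel T).

Lemma card_le_sum_W_rows (A B : {set T}) :
  {in A, forall u, exists2 v, v \in B & e u v} ->
  #|A| <= \sum_(u in A) \sum_(v in B) W e u v.
Proof.
move=> nbrB; rewrite -sum1_card; apply: leq_sum => u /nbrB [v vB euv].
by rewrite (bigD1 v) //= /W euv orbT.
Qed.

Lemma card_le_sum_W_cols (A B : {set T}) :
  {in B, forall v, exists2 u, u \in A & e u v} ->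
  #|B| <= \sum_(u in A) \sum_(v in B) W e u v.
Proof.
move=> nbrA; rewrite exchange_big -sum1_card; apply: leq_sum => v /nbrA [u uA euv].
by rewrite (bigD1 u) //= /W euv orbT.
Qed.

End BipartiteEdgeCount.

Section MaximalIndependent.

Variables (T : finType) (e : rel T).
Hypotheses (e_sym : symmetric e) (e_irr : irreflexive e).

Lemma independent_setU1 (S : {set T}) v :
  independent e S -> {in S, forall u, ~~ e u v} -> independent e (v |: S).
Proof.
move=> indS nbrS a b; rewrite !inE => /predU1P[-> | aS] /predU1P[-> | bS].
- by rewrite e_irr.
- by rewrite e_sym nbrS.
- exact: nbrS.
- exact: indS.
Qed.

Lemma maximal_independent_in_dominates (U S : {set T}) :
  maximal_independent_in e U S ->
  {in U :\: S, forall v, exists2 u, u \in S & e u v}.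
Proof.
move=> [sSU indS maxS] v; rewrite inE => /andP[vNS vU].
have [/existsP[u /andP[uS euv]] | noNbr] := boolP [exists u in S, e u v].
  by exists u.
exfalso; apply: (maxS (v |: S)).
- by rewrite properUr // sub1set.
- by rewrite subUset sub1set vU.
- apply: independent_setU1 => // u uS; apply: contra noNbr => euv.
  by apply/existsP; exists u; rewrite uS.
Qed.

End MaximalIndependent.

Theorem lemma5p1 (T : finType) (e : rel T) (DS IS : {set T}) :
  simple_graph e ->
  dominating e DS ->
  maximal_independent_in e (~: DS) IS ->
  #|T| - #|DS| <= cut e IS.
Proof.
move=> [e_sym e_irr] domDS maxIS; have [sISV _ _] := maxIS.
have card_V_DS : #|T| - #|DS| = #|IS| + #|~: DS :\: IS|.
  by rewrite -(cardsC DS) addKn -(cardsID IS (~: DS)) (setIidPr sISV).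
have IS_to_DS : {in IS, forall u, exists2 v, v \in DS :\: IS & e u v}.
  move=> u uIS; have uNDS : u \notin DS by rewrite -in_setC (subsetP sISV).
  have [d dDS eud] := domDS u uNDS.
  exists d => //; rewrite inE dDS andbT.
  by apply: contraTN dDS => dIS; rewrite -in_setC (subsetP sISV).
have rest_to_IS := maximal_independent_in_dominates e_sym e_irr maxIS.
rewrite card_V_DS /cut.
under eq_bigr => u _ do rewrite (big_setID DS) /=.
rewrite big_split /= [~: IS :&: DS]setIC -setDE.
have -> : ~: IS :\: DS = ~: DS :\: IS by rewrite !setDE setIC.
exact: leq_add (card_le_sum_W_rows IS_to_DS) (card_le_sum_W_cols rest_to_IS).
Qed.
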